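(* Let $m,k\in\mathbb{N}$ and let $\alpha\in\mathbb{C}$ with $\alpha,\ 1+\alpha+2m+k,\ 1+\alpha+2m\notin\mathbb{Z}_0^-$. Then \[ {}_3F_2\left[\begin{array}{r} -2m,\ \alpha,\ 1+\alpha+2m+k;\\ -2m-k,\ 1+\alpha+2m;\end{array}1\right]_{2m}=\frac{(1+\alpha)_{2m}\left(1+\frac{\alpha}{2}+k\right)_{2m}}{\left(1+\frac{\alpha}{2}\right)_{2m}(1+k)_{2m}}. \]
   Context: $\mathbb{N}=\{1,2,3,\dots\}$, $\mathbb{Z}_0^-=\{0,-1,-2,\dots\}$. For $a\in\mathbb{C}$ and $n\in\mathbb{N}_0$, $(a)_0=1$ and $(a)_n=a(a+1)\cdots(a+n-1)$. For $N\in\mathbb{N}_0$, ${}_3F_2\left[\begin{array}{r} a_1,a_2,a_3;\\ b_1,b_2;\end{array}z\right]_N=\sum_{n=0}^{N}\frac{(a_1)_n(a_2)_n(a_3)_n}{(b_1)_n(b_2)_n}\frac{z^n}{n!}$ (the sum of the first $N+1$ terms), defined whenever $(b_1)_n(b_2)_n\neq0$ for $0\le n\le N$. *)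

From HB Require Import structures.
From mathcomp Require Import all_boot all_order all_algebra.
From mathcomp Require Import complex.
From mathcomp Require Import reals.
Set Implicit Arguments. Unset Strict Implicit. Unset Printing Implicit Defensive.
Import Order.TTheory GRing.Theory Num.Theory.
Local Open Scope ring_scope.

Definition poch {F : pzRingType} (a : F) (n : nat) : F :=
  \prod_(i < n) (a + i%:R).

Definition not_nonpos_int {F : pzRingType} (a : F) : Prop :=
  forall n : nat, a <> - n%:R.

Definition F32_trunc {F : fieldType} (a1 a2 a3 b1 b2 z : F) (N : nat) : F :=
  \sum_(n < N.+1)
    (poch a1 n * poch a2 n * poch a3 n) / (poch b1 n * poch b2 n)
      * z ^+ n / (n`!)%:R.

(* With c = 1 + a + N, the reflection (-N)_n (N+1)_k = (-N-k)_n (N-n+1)_k and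
   the splitting (c+k)_n c_k = c_n (c+n)_k turn the truncated series into
   S(a,N,k) / ((N+1)_k c_k), where S(a,N,k) = sum_(n<=N) (a)_n/n! (N-n+1)_k (c+n)_k.
   Writing (N+1-n)(a+N+1+n) = (N+1)(a+N+1) - n(a+n) and shifting the index gives
     S(a,N,k+1) = (N+1)(a+N+1) S(a,N+1,k) - a(a+1) S(a+2,N,k),
   a recurrence in k that is also satisfied by
     k! (1+a)_(N+k) (1+a/2)_(N+k) / (N! (1+a/2)_N (1+a/2)_k).
   Both agree at k = 0, where S(a,N,0) = sum_(n<=N) (a)_n/n! = (1+a)_N/N!, so induction
   on k evaluates S; the right-hand side then appears after splitting the Pochhammer
   symbols of length N+k and using k! (1+k)_N = (N+k)! = N! (N+1)_k. *)

From HB Require Import structures.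
From mathcomp Require Import all_boot all_order all_algebra.
From mathcomp Require Import complex.
From mathcomp Require Import reals.
From mathcomp Require Import ring.
Set Implicit Arguments. Unset Strict Implicit. Unset Printing Implicit Defensive.
Import Order.TTheory GRing.Theory Num.Theory.
Local Open Scope ring_scope.

Section PochhammerRing.
Variable R : pzRingType.
Implicit Types x : R.

Lemma poch0 x : poch x 0 = 1.
Proof. by rewrite /poch big_ord0. Qed.

Lemma pochS x n : poch x n.+1 = poch x n * (x + n%:R).
Proof. by rewrite /poch big_ord_recr. Qed.

Lemma pochSl x n : poch x n.+1 = x * poch (x + 1) n.
Proof.
rewrite /poch big_ord_recl addr0; congr (_ * _).
by apply: eq_bigr => i _; rewrite /bump /= -natr1 addrA addrAC.
Qed.

Lemma pochD x m n : poch x (m + n) = poch x m * poch (x + m%:R) n.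
Proof.
rewrite /poch big_split_ord; congr (_ * _).
by apply: eq_bigr => i _; rewrite natrD addrA.
Qed.

Lemma poch1 n : poch (1 : R) n = n`!%:R.
Proof.
elim: n => [|n IHn]; first by rewrite poch0.
by rewrite pochS IHn factS mulnC natrM nat1r.
Qed.

End PochhammerRing.

Section PochhammerComRing.
Variable R : comPzRingType.
Implicit Types x : R.

Lemma poch_opp x n : poch (- x) n = (-1) ^+ n * poch (x - n%:R + 1) n.
Proof.
elim: n x => [|n IHn] x; first by rewrite !poch0 mul1r.
rewrite pochSl (_ : - x + 1 = - (x - 1)); last by ring.
rewrite IHn pochS exprS -natr1.
rewrite (_ : x - 1 - n%:R + 1 = x - (n%:R + 1) + 1); last by ring.
rewrite (_ : x - (n%:R + 1) + 1 + n%:R = x); last by ring.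
ring.
Qed.

Lemma poch_opp_swap x n k :
  poch (- x) n * poch (x + 1) k = poch (- x - k%:R) n * poch (x - n%:R + 1) k.
Proof.
apply: (@lreg_sign _ k).
have Ek : poch (- x - k%:R) k = (-1) ^+ k * poch (x + 1) k.
  by rewrite -opprD poch_opp addrK.
have En : poch (- x - k%:R + n%:R) k = (-1) ^+ k * poch (x - n%:R + 1) k.
  rewrite (_ : _ + n%:R = - (x - n%:R + k%:R)); last by ring.
  by rewrite poch_opp addrK.
have := pochD (- x - k%:R) k n; rewrite addnC pochD subrK => E.
by rewrite mulrCA -Ek [RHS]mulrCA -En mulrC E.
Qed.

End PochhammerComRing.

Lemma poch_addr1 (F : fieldType) (x : F) n : x != 0 -> poch (x + 1) n = poch x n.+1 / x.
Proof. by move=> x0; rewrite pochSl mulrAC divff ?mul1r. Qed.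

Section NonPositiveIntegers.
Variable F : numFieldType.
Implicit Types a : F.

Lemma natr_fact_neq0 n : n`!%:R != 0 :> F.
Proof. by rewrite pnatr_eq0 -lt0n fact_gt0. Qed.

Lemma not_nonpos_int_neq0 a : not_nonpos_int a -> a != 0.
Proof. by move=> ha; apply/eqP => a0; apply: (ha 0%N); rewrite a0 oppr0. Qed.

Lemma not_nonpos_int_addn a n : not_nonpos_int a -> not_nonpos_int (a + n%:R).
Proof. by move=> ha j e; apply: (ha (j + n)%N); rewrite natrD opprD -e addrK. Qed.

Lemma poch_neq0 a n : not_nonpos_int a -> poch a n != 0.
Proof.
by move=> ha; apply/prodf_neq0 => i _; apply/not_nonpos_int_neq0/not_nonpos_int_addn.
Qed.

Lemma not_nonpos_int_1addn n : not_nonpos_int (1 + n%:R : F).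
Proof. by move=> j /eqP; rewrite nat1r -addr_eq0 -natrD pnatr_eq0 addSn. Qed.

Lemma not_nonpos_int_half a : not_nonpos_int a -> not_nonpos_int (1 + a / 2).
Proof.
move=> ha j e; apply: (ha (2 * j + 2)%N).
have -> : a = 2 * (1 + a / 2) - 2 by field.
by rewrite e natrD natrM; ring.
Qed.

Lemma poch_oppn_neq0 M n : (n <= M)%N -> poch (- M%:R : F) n != 0.
Proof.
move=> le_nM; apply/prodf_neq0 => i _.
have lt_iM : (i < M)%N := leq_trans (ltn_ord i) le_nM.
by rewrite addrC -opprB -natrB ?oppr_eq0 ?pnatr_eq0 ?subn_eq0 -?ltnNge // ltnW.
Qed.

End NonPositiveIntegers.

Section ReducedSum.
Variable F : numFieldType.
Implicit Types a : F.

Lemma sum_poch_div_fact a N :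
  \sum_(n < N.+1) poch a n / n`!%:R = poch (1 + a) N / N`!%:R.
Proof.
elim: N => [|N IHN]; first by rewrite big_ord1 !poch0.
rewrite big_ord_recr /= IHN (pochS (1 + a)) (pochSl a) (addrC a 1) factS natrM.
by field; rewrite natr_fact_neq0 nat1r pnatr_eq0.
Qed.

Definition reduced_term a (N k n : nat) : F :=
  poch a n / n`!%:R * (poch (N%:R - n%:R + 1) k * poch (1 + a + N%:R + n%:R) k).

Definition reduced_sum a (N k : nat) : F := \sum_(n < N.+1) reduced_term a N k n.

Lemma reduced_termSk a N k n :
  reduced_term a N k.+1 n =
  (N.+1%:R - n%:R) * (a + N.+1%:R + n%:R) * reduced_term a N.+1 k n.
Proof.
rewrite /reduced_term !pochSl -natr1.
rewrite (_ : N%:R - n%:R + 1 + 1 = N%:R + 1 - n%:R + 1); last by ring.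
rewrite (_ : 1 + a + N%:R + n%:R + 1 = 1 + a + (N%:R + 1) + n%:R); last by ring.
ring.
Qed.

Lemma reduced_term_shift a N k n :
  n.+1%:R * (a + n.+1%:R) * reduced_term a N.+1 k n.+1 =
  a * (a + 1) * reduced_term (a + 2) N k n.
Proof.
have Ea : poch a n.+1 * (a + n.+1%:R) = a * (a + 1) * poch (a + 2) n.
  rewrite pochSl -mulrA (_ : a + n.+1%:R = a + 1 + n%:R); last by rewrite -natr1; ring.
  by rewrite -pochS pochSl -addrA mulrA.
rewrite /reduced_term.
rewrite (_ : N.+1%:R - n.+1%:R + 1 = N%:R - n%:R + 1); last by rewrite -!natr1; ring.
rewrite (_ : 1 + a + N.+1%:R + n.+1%:R = 1 + (a + 2) + N%:R + n%:R); last first.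
  by rewrite -!natr1; ring.
set W := poch (N%:R - n%:R + 1) k * _.
transitivity (poch a n.+1 * (a + n.+1%:R) / n`!%:R * W); last by rewrite Ea; ring.
by rewrite factS natrM; field; rewrite natr_fact_neq0 nat1r pnatr_eq0.
Qed.

Lemma reduced_sum_rec a N k :
  reduced_sum a N k.+1 =
  N.+1%:R * (a + N.+1%:R) * reduced_sum a N.+1 k
  - a * (a + 1) * reduced_sum (a + 2) N k.
Proof.
have -> : reduced_sum a N k.+1 = \sum_(n < N.+2)
    (N.+1%:R - n%:R) * (a + N.+1%:R + n%:R) * reduced_term a N.+1 k n.
  rewrite [RHS]big_ord_recr /= subrr !mul0r addr0.
  by apply: eq_bigr => n _; rewrite reduced_termSk.
rewrite (eq_bigr (fun n : 'I_N.+2 =>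
    N.+1%:R * (a + N.+1%:R) * reduced_term a N.+1 k n
    - n%:R * (a + n%:R) * reduced_term a N.+1 k n)); last by move=> n _; ring.
rewrite sumrB -mulr_sumr; congr (_ - _).
rewrite big_ord_recl /= !mul0r add0r /reduced_sum mulr_sumr.
by apply: eq_bigr => n _; exact: reduced_term_shift.
Qed.

Definition reduced_closed a (N k : nat) : F :=
  k`!%:R * poch (1 + a) (N + k) * poch (1 + a / 2) (N + k)
  / (N`!%:R * poch (1 + a / 2) N * poch (1 + a / 2) k).

Lemma reduced_closed_rec a N k : not_nonpos_int a ->
  reduced_closed a N k.+1 =
  N.+1%:R * (a + N.+1%:R) * reduced_closed a N.+1 k
  - a * (a + 1) * reduced_closed (a + 2) N k.
Proof.
move=> ha; have hx := not_nonpos_int_half ha.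
rewrite /reduced_closed addSn addnS.
rewrite (_ : 1 + (a + 2) / 2 = 1 + a / 2 + 1); last by field.
rewrite (_ : 1 + (a + 2) = 1 + a + 1 + 1); last by ring.
have x0 := not_nonpos_int_neq0 hx.
have a1 : not_nonpos_int (1 + a) by rewrite addrC; exact: (not_nonpos_int_addn (n := 1) ha).
have a2 := not_nonpos_int_neq0 (not_nonpos_int_addn (n := 1) a1).
have a0 := not_nonpos_int_neq0 a1.
have twice_x j : 2 + a + j%:R * 2 = 2 * (1 + a / 2 + j%:R) by field.
have x2 j : 2 + a + j%:R * 2 != 0.
  rewrite twice_x mulf_neq0 ?pnatr_eq0 //.
  exact: not_nonpos_int_neq0 (not_nonpos_int_addn hx).
have x20 : 2 + a != 0 by have := x2 0%N; rewrite mul0r addr0.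
rewrite !poch_addr1 // !pochS !factS !natrM.
rewrite -[(N + k).+1]addn1 !natrD.
by field; rewrite x20 !x2 !poch_neq0 // natr_fact_neq0 a0 nat1r pnatr_eq0.
Qed.

Lemma reduced_sum_closed a N k : not_nonpos_int a ->
  reduced_sum a N k = reduced_closed a N k.
Proof.
elim: k a N => [|k IHk] a N ha.
  have hx := poch_neq0 N (not_nonpos_int_half ha).
  rewrite /reduced_sum /reduced_closed.
  under eq_bigr do rewrite /reduced_term !poch0 !mulr1.
  by rewrite sum_poch_div_fact addn0 poch0 fact0 mul1r mulr1 invfM mulrACA divff ?mulr1.
rewrite reduced_sum_rec reduced_closed_rec // !IHk //.
exact: not_nonpos_int_addn.
Qed.

End ReducedSum.

Section TruncatedF32.
Variable F : numFieldType.
Implicit Types a : F.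

Lemma F32_term a N k n : not_nonpos_int (1 + a + N%:R) -> (n <= N)%N ->
  poch (- N%:R) n * poch a n * poch (1 + a + N%:R + k%:R) n
    / (poch (- N%:R - k%:R) n * poch (1 + a + N%:R) n) * 1 ^+ n / n`!%:R
  = reduced_term a N k n / (poch (1 + N%:R) k * poch (1 + a + N%:R) k).
Proof.
move=> hc le_nN; set c := 1 + a + N%:R.
have hNk : poch (- N%:R - k%:R) n != 0 :> F.
  by rewrite -opprD -natrD poch_oppn_neq0 // (leq_trans le_nN) ?leq_addr.
have hN1 : poch (1 + N%:R) k != 0 :> F := poch_neq0 k (not_nonpos_int_1addn (n := N)).
have hcn := poch_neq0 n hc; have hck := poch_neq0 k hc.
have E1 : poch (- N%:R) n =
    poch (- N%:R - k%:R) n * poch (N%:R - n%:R + 1) k / poch (1 + N%:R) k :> F.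
  by rewrite -poch_opp_swap [N%:R + 1]addrC mulfK.
have E2 : poch (c + k%:R) n = poch c n * poch (c + n%:R) k / poch c k.
  by rewrite -pochD addnC pochD mulrAC divff ?mul1r.
rewrite /reduced_term E1 E2 expr1n.
by field; rewrite hNk hN1 hcn hck natr_fact_neq0.
Qed.

Lemma F32_trunc_reduced a N k : not_nonpos_int (1 + a + N%:R) ->
  F32_trunc (- N%:R) a (1 + a + N%:R + k%:R) (- N%:R - k%:R) (1 + a + N%:R) 1 N
  = reduced_sum a N k / (poch (1 + N%:R) k * poch (1 + a + N%:R) k).
Proof.
move=> hc; rewrite /F32_trunc /reduced_sum mulr_suml.
by apply: eq_bigr => n _; rewrite F32_term // -ltnS.
Qed.

Lemma F32_trunc_closed a N k : not_nonpos_int a ->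
  F32_trunc (- N%:R) a (1 + a + N%:R + k%:R) (- N%:R - k%:R) (1 + a + N%:R) 1 N
  = (poch (1 + a) N * poch (1 + a / 2 + k%:R) N)
    / (poch (1 + a / 2) N * poch (1 + k%:R) N).
Proof.
move=> ha.
have hc : not_nonpos_int (1 + a + N%:R).
  by rewrite addrAC addrC nat1r; exact: not_nonpos_int_addn.
have hx := not_nonpos_int_half ha.
have fact_swap : k`!%:R * poch (1 + k%:R) N = N`!%:R * poch (1 + N%:R) k :> F.
  by rewrite -!poch1 -!pochD addnC.
have -> : poch (1 + k%:R) N = N`!%:R * poch (1 + N%:R) k / k`!%:R :> F.
  by rewrite -fact_swap mulrAC divff ?mul1r ?natr_fact_neq0.
rewrite F32_trunc_reduced // reduced_sum_closed // /reduced_closed.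
rewrite (pochD (1 + a)) addnC pochD.
have hN1 : poch (1 + N%:R) k != 0 :> F := poch_neq0 k (not_nonpos_int_1addn (n := N)).
by field; rewrite hN1 !poch_neq0 // !natr_fact_neq0.
Qed.

End TruncatedF32.

Local Open Scope complex_scope.

(* The identity holds for every length N, not only even ones. *)
Theorem mainTheorem14 (R : realType) (m k : nat) (alpha : R[i])
  (hm : (0 < m)%N) (hk : (0 < k)%N)
  (h1 : not_nonpos_int alpha)
  (h2 : not_nonpos_int (1 + alpha + (2 * m)%:R + k%:R))
  (h3 : not_nonpos_int (1 + alpha + (2 * m)%:R)) :
  F32_trunc (- (2 * m)%:R) alpha (1 + alpha + (2 * m)%:R + k%:R)
            (- (2 * m)%:R - k%:R) (1 + alpha + (2 * m)%:R) 1 (2 * m)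
  = (poch (1 + alpha) (2 * m) * poch (1 + alpha / 2%:R + k%:R) (2 * m))
    / (poch (1 + alpha / 2%:R) (2 * m) * poch (1 + k%:R) (2 * m)).
Proof. exact: F32_trunc_closed. Qed.
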